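(* Let $m\geq 2$ be an integer, $(t_j)_{j=0}^{\infty}$ the $TM_m$ sequence and $\mathbf{t}=t_0t_1t_2\ldots$. Then for every positive integer $n$, $p_{\mathbf{t}}(n)\leq m^3 n$.
   Context: For an integer $m\geq 2$, the $TM_m$ sequence $(t_n)_{n=0}^{\infty}$ is defined by: if $n=\sum_{j=0}^{k}c_j m^j$ is the base-$m$ expansion of $n\geq 0$ (digits $c_j\in\{0,\ldots,m-1\}$), then $t_n:=\sum_{j=0}^{k}c_j \bmod m$. For an infinite word $\mathbf{w}$ over a finite alphabet, the complexity function $p_{\mathbf{w}}(n)$ is the number of distinct (contiguous) subwords of $\mathbf{w}$ of length $n$. *)

From mathcomp Require Import all_boot.
Set Implicit Arguments. Unset Strict Implicit. Unset Printing Implicit Defensive.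

Fixpoint digit_sum_aux (fuel m n : nat) : nat :=
  match fuel with
  | 0 => 0
  | fuel'.+1 => if n is 0 then 0 else n %% m + digit_sum_aux fuel' m (n %/ m)
  end.

Definition digit_sum (m n : nat) : nat := digit_sum_aux n.+1 m n.

Definition TM (m : nat) (n : nat) : nat := digit_sum m n %% m.

Definition subword (w : nat -> nat) (i n : nat) : seq nat := mkseq (fun k => w (i + k)) n.

Definition is_factor (w : nat -> nat) (n : nat) (u : seq nat) : Prop :=
  exists i, u = subword w i n.

(* p_w(n) <= K : every collection of pairwise distinct factors of length n
   has at most K elements, i.e. the number of distinct factors is <= K *)
Definition complexity_le (w : nat -> nat) (n K : nat) : Prop :=
  forall s : seq (seq nat), uniq s -> (forall u, u \in s -> is_factor w n u) -> size s <= K.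

From mathcomp Require Import all_boot zify.

(* Cut the sequence into blocks of length L = m^k, with k minimal such that
   n < L, so that L <= m n.  Since the base-m digits of q L + r are those of q
   followed by the k digits of r, t_(q L + r) = t_q + t_r (mod m).  Hence a
   factor of length n starting at i is determined by i mod L and the two
   letters t_(i/L), t_(i/L + 1) shifting the two blocks it meets, which leaves
   at most L m^2 <= m^3 n factors. *)

Section DigitSum.
Variable m : nat.
Hypothesis m_gt1 : 1 < m.

Lemma digit_sum_aux_fuel fuel fuel' n : n < fuel -> n < fuel' ->
  digit_sum_aux fuel m n = digit_sum_aux fuel' m n.
Proof.
elim: fuel fuel' n => [|f IH] [|f'] [|n] //= lt_n_f lt_n_f'.
by congr (_ + _); apply: IH; rewrite ltn_divLR; nia.
Qed.

Lemma digit_sumE n :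
  digit_sum m n = if n is 0 then 0 else n %% m + digit_sum m (n %/ m).
Proof.
case: n => [|n] //.
have -> : digit_sum m n.+1 = n.+1 %% m + digit_sum_aux n.+1 m (n.+1 %/ m) by [].
by congr (_ + _); apply: digit_sum_aux_fuel => //; rewrite ltn_divLR; nia.
Qed.

Lemma digit_sumMD a d : d < m -> digit_sum m (a * m + d) = d + digit_sum m a.
Proof.
move=> lt_d_m; rewrite digit_sumE.
case E: (a * m + d) => [|x]; first by have [-> ->] : a = 0 /\ d = 0 by nia.
by rewrite -E modnMDl modn_small // divnMDl ?divn_small ?addn0 //; lia.
Qed.

Lemma digit_sum_blockD k q r : r < m ^ k ->
  digit_sum m (q * m ^ k + r) = digit_sum m q + digit_sum m r.
Proof.
elim: k q r => [|k IH] q r lt_r_mk.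
  have -> : r = 0 by rewrite expn0 in lt_r_mk; lia.
  by rewrite muln1 addn0 [digit_sum m 0]digit_sumE addn0.
have lt_rm_mk : r %/ m < m ^ k by rewrite ltn_divLR -?expnSr //; lia.
have -> : q * m ^ k.+1 + r = (q * m ^ k + r %/ m) * m + r %% m.
  by rewrite {1}(divn_eq r m) expnSr; nia.
rewrite digit_sumMD ?ltn_pmod //; last lia.
rewrite IH // {3}(divn_eq r m) digit_sumMD ?ltn_pmod //; lia.
Qed.

Lemma TM_blockD k q r : r < m ^ k -> TM m (q * m ^ k + r) = (TM m q + TM m r) %% m.
Proof. by move=> lt_r_mk; rewrite /TM digit_sum_blockD // modnDm. Qed.

Lemma TM_lt n : TM m n < m.
Proof. by rewrite ltn_pmod //; lia. Qed.

End DigitSum.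

(* The length-n word read from offset r in the concatenation of the block
   [0, L) shifted by a and the next block shifted by b. *)
Definition TM_window (m L n r a b : nat) : seq nat :=
  mkseq (fun j => if r + j < L then (a + TM m (r + j)) %% m
                  else (b + TM m (r + j - L)) %% m) n.

Lemma subword_TM_window {m k} i n : 1 < m -> n <= m ^ k ->
  subword (TM m) i n =
  TM_window m (m ^ k) n (i %% m ^ k) (TM m (i %/ m ^ k)) (TM m (i %/ m ^ k).+1).
Proof.
move=> m_gt1 le_n_L; set L := m ^ k.
have L_gt0 : 0 < L by rewrite expn_gt0; lia.
have lt_iL := ltn_pmod i L_gt0.
apply: (@eq_from_nth _ 0); first by rewrite !size_mkseq.
move=> j; rewrite size_mkseq => lt_j_n; rewrite !nth_mkseq //.
case: ifP => in_first.
  have -> : i + j = i %/ L * L + (i %% L + j) by rewrite {1}(divn_eq i L); lia.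
  by rewrite TM_blockD.
have -> : i + j = (i %/ L).+1 * L + (i %% L + j - L).
  by rewrite {1}(divn_eq i L); move: in_first; nia.
by rewrite TM_blockD //; move: in_first; lia.
Qed.

Lemma complexity_le_image {T : finType} {w : nat -> nat} {n} (f : T -> seq nat) :
  (forall i, exists x, subword w i n = f x) -> complexity_le w n #|T|.
Proof.
move=> cover s uniq_s factor_s; rewrite -(size_image f predT).
apply: uniq_leq_size uniq_s _ => u /factor_s [i ->].
by have [x ->] := cover i; apply: image_f.
Qed.

Lemma exists_power_between {m n} : 1 < m -> 0 < n -> exists k, n < m ^ k <= m * n.
Proof.
move=> m_gt1 n_gt0; exists (trunc_log m n).+1.
by rewrite trunc_log_ltn // expnS leq_mul2l trunc_logP ?orbT.
Qed.

Theorem lemma4p1 (m : nat) (hm : 2 <= m) (n : nat) (hn : 0 < n) :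
  complexity_le (TM m) n (m ^ 3 * n).
Proof.
have [k /andP [lt_n_L le_L_mn]] := exists_power_between hm hn.
set L := m ^ k in lt_n_L le_L_mn.
have L_gt0 : 0 < L by lia.
pose window (x : 'I_L * 'I_m * 'I_m) := TM_window m L n x.1.1 x.1.2 x.2.
move=> s uniq_s factor_s; apply: (@leq_trans #|{: 'I_L * 'I_m * 'I_m}|).
  apply: (complexity_le_image window) uniq_s factor_s => i.
  exists (Ordinal (ltn_pmod i L_gt0), Ordinal (TM_lt m hm (i %/ L)),
          Ordinal (TM_lt m hm (i %/ L).+1)).
  exact: subword_TM_window hm (ltnW lt_n_L).
by rewrite !card_prod !card_ord; nia.
Qed.
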